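(* Let $\Theta\subset\mathbb R^d$ and let $A:\Theta\to S^d_+(\mathbb R)$ be $L$-Lipschitz with respect to the Frobenius norm. Then for all $\beta>0$, $v\in\mathbb R^d$ and $\theta_1,\theta_2\in\Theta$, \[ \|v\|^2_{A_\beta(\theta_2)}\le\big(3+L\beta^{-1}|\theta_1-\theta_2|\big)\,\|v\|^2_{A_\beta(\theta_1)}. \]
   Context: $S^d_+(\mathbb R)$ is the set of real symmetric positive semidefinite $d\times d$ matrices. For $A\in S^d_+(\mathbb R)$ with spectral decomposition $A=\sum_{j=1}^d\lambda_j u_ju_j^T$ (orthonormal eigenvectors $u_j$) and $\beta>0$, define $A_\beta=\sum_{j=1}^d\max(\lambda_j,\beta)u_ju_j^T$ (eigenvalues below $\beta$ replaced by $\beta$). For a matrix $M\in S^d_+(\mathbb R)$ and $v\in\mathbb R^d$, $\|v\|_M=\sqrt{\langle Mv,v\rangle}$. $|\cdot|$ is the Euclidean norm. *)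

From HB Require Import structures.
From mathcomp Require Import all_boot all_order all_algebra.
From mathcomp Require Import boolp classical_sets reals.
Set Implicit Arguments. Unset Strict Implicit. Unset Printing Implicit Defensive.
Import Order.TTheory GRing.Theory Num.Theory.
Local Open Scope ring_scope.

Definition eucl_norm {R : realType} {d : nat} (v : 'cV[R]_d) : R :=
  Num.sqrt (\sum_(i < d) v i 0 ^+ 2).

Definition frob_norm {R : realType} {d : nat} (M : 'M[R]_d) : R :=
  Num.sqrt (\sum_(i < d) \sum_(j < d) M i j ^+ 2).

Definition inner {R : realType} {d : nat} (x y : 'cV[R]_d) : R :=
  \sum_(i < d) x i 0 * y i 0.

Definition normM {R : realType} {d : nat} (M : 'M[R]_d) (v : 'cV[R]_d) : R :=
  Num.sqrt (inner (M *m v) v).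

Definition psd {R : realType} {d : nat} (M : 'M[R]_d) : Prop :=
  M^T = M /\ forall v : 'cV[R]_d, 0 <= inner (M *m v) v.

(* M is obtained from A by a spectral decomposition A = sum_j lambda_j u_j u_j^T
   (columns u_j of U orthonormal), replacing each eigenvalue lambda_j by
   max(lambda_j, beta). *)
Definition is_Abeta {R : realType} {d : nat} (A : 'M[R]_d) (beta : R) (M : 'M[R]_d)
  : Prop :=
  exists (U : 'M[R]_d) (lam : 'I_d -> R),
    U^T *m U = 1%:M /\
    A = \sum_(j < d) lam j *: (col j U *m (col j U)^T) /\
    M = \sum_(j < d) Num.max (lam j) beta *: (col j U *m (col j U)^T).

(* A_beta: the (well-defined, by the spectral theorem) matrix above;
   chosen via classical choice. *)
Definition Abeta {R : realType} {d : nat} (A : 'M[R]_d) (beta : R) : 'M[R]_d :=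
  xget 0 [set M | is_Abeta A beta M].

From HB Require Import structures.
From mathcomp Require Import all_boot all_order all_algebra.
From mathcomp Require Import boolp classical_sets reals.
From mathcomp Require Import spectral complex.
From mathcomp Require Import ring lra.
Import Order.TTheory GRing.Theory Num.Theory.
Set Implicit Arguments. Unset Strict Implicit. Unset Printing Implicit Defensive.
Local Open Scope ring_scope.

(* Diagonalize A = U diag(lam) U^T with U orthogonal, so that A_beta = U diag(max(lam, beta)) U^T.
   In the eigenbasis the quadratic forms compare termwise:
     beta |v|^2 <= <A_beta v, v>,   <A v, v> <= <A_beta v, v> <= <A v, v> + beta |v|^2.
   Together with |<(A1 - A2) v, v>| <= |A1 - A2|_F |v|^2 (Cauchy-Schwarz) this gives
     <A_beta(th2) v, v> <= <A(th1) v, v> + (|A(th1) - A(th2)|_F + beta) |v|^2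
                        <= (2 + L |th1 - th2| / beta) <A_beta(th1) v, v>.
   The spectral theorem for real symmetric matrices, needed for A_beta to exist, is proved by
   induction: an eigenvalue of A seen over R[i] is real since A is hermitian, its real
   eigenvector is completed to an orthogonal matrix by a Householder reflection, and conjugating
   by it splits off a 1x1 block. *)

Lemma sum_mulr_sqr_le (R : realDomainType) (I : finType) (x y : I -> R) :
  (\sum_i x i * y i) ^+ 2 <= (\sum_i x i ^+ 2) * (\sum_i y i ^+ 2).
Proof.
have sum_mulE (a b : I -> R) : \sum_i \sum_j a i * b j = (\sum_i a i) * (\sum_j b j).
  by rewrite mulr_suml; apply: eq_bigr => i _; rewrite mulr_sumr.
have lagrange : \sum_i \sum_j (x i * y j - x j * y i) ^+ 2
    = 2 * ((\sum_i x i ^+ 2) * (\sum_i y i ^+ 2) - (\sum_i x i * y i) ^+ 2).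
  transitivity (\sum_i \sum_j (x i ^+ 2 * y j ^+ 2 + y i ^+ 2 * x j ^+ 2
                               - 2 * (x i * y i) * (x j * y j))).
    by apply: eq_bigr => i _; apply: eq_bigr => j _; ring.
  under eq_bigr => i _ do rewrite sumrB big_split /=.
  by rewrite sumrB big_split /= !sum_mulE -mulr_sumr; ring.
rewrite -subr_ge0 -(pmulr_rge0 _ (ltr0Sn _ 1)) -lagrange.
by do 2!apply: sumr_ge0 => ? _; rewrite sqr_ge0.
Qed.

Section InnerProduct.
Variables (R : realType) (d : nat).
Implicit Types (x y v w : 'cV[R]_d) (M U : 'M[R]_d).

Lemma innerE x y : inner x y = (x^T *m y) 0 0.
Proof. by rewrite /inner mxE; apply: eq_bigr => i _; rewrite mxE. Qed.

Lemma inner_mulmxl M x y : inner (M *m x) y = inner x (M^T *m y).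
Proof. by rewrite !innerE trmx_mul mulmxA. Qed.

Lemma inner_selfE v : inner v v = \sum_i v i 0 ^+ 2.
Proof. by apply: eq_bigr => i _; rewrite expr2. Qed.

Lemma innerBl x y v : inner (x - y) v = inner x v - inner y v.
Proof. by rewrite /inner -sumrB; apply: eq_bigr => i _; rewrite !mxE mulrBl. Qed.

Lemma inner_self_ge0 x : 0 <= inner x x.
Proof. by rewrite inner_selfE; apply: sumr_ge0 => i _; rewrite sqr_ge0. Qed.

Lemma inner_orthomx U x : U^T *m U = 1%:M -> inner (U^T *m x) (U^T *m x) = inner x x.
Proof. by move=> /mulmx1C UU; rewrite inner_mulmxl trmxK mulmxA UU mul1mx. Qed.

Lemma inner_diag_mx (c : 'rV[R]_d) w :
  inner (diag_mx c *m w) w = \sum_j c 0 j * w j 0 ^+ 2.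
Proof. by apply: eq_bigr => j _; rewrite mul_diag_mx mxE -mulrA -expr2. Qed.

Lemma sum_rank1E U (c : 'I_d -> R) :
  \sum_(j < d) c j *: (col j U *m (col j U)^T) = U *m diag_mx (\row_j c j) *m U^T.
Proof.
apply/matrixP => i k; rewrite mul_mx_diag summxE mxE; apply: eq_bigr => j _.
by rewrite !mxE big_ord1 !mxE; ring.
Qed.

Lemma inner_sum_rank1 U (c : 'I_d -> R) v :
  inner ((\sum_(j < d) c j *: (col j U *m (col j U)^T)) *m v) v
  = \sum_j c j * (U^T *m v) j 0 ^+ 2.
Proof.
rewrite sum_rank1E -!mulmxA inner_mulmxl inner_diag_mx.
by apply: eq_bigr => j _; rewrite mxE.
Qed.

Lemma inner_self_gt0 v : v != 0 -> 0 < inner v v.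
Proof.
move=> v_neq0; rewrite lt_def inner_self_ge0 andbT; apply: contra v_neq0.
rewrite inner_selfE => /eqP vv0; apply/eqP/matrixP => i j; rewrite ord1 mxE.
by apply/eqP; rewrite -sqrf_eq0 (psumr_eq0P (fun k _ => sqr_ge0 (v k 0)) vv0).
Qed.

Lemma inner_mulmx_le_frob M v :
  `|inner (M *m v) v| <= frob_norm M * inner v v.
Proof.
pose w (p : 'I_d * 'I_d) := v p.1 0 * v p.2 0.
have quadE : inner (M *m v) v = \sum_p M p.1 p.2 * w p.
  rewrite -(pair_bigA _ (fun i j => M i j * w (i, j))) /=.
  by apply: eq_bigr => i _; rewrite mxE mulr_suml; apply: eq_bigr => j _; rewrite /w; ring.
have frobE : frob_norm M = Num.sqrt (\sum_p M p.1 p.2 ^+ 2).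
  by rewrite /frob_norm -(pair_bigA _ (fun i j => M i j ^+ 2)).
have normE : inner v v = Num.sqrt (\sum_p w p ^+ 2).
  rewrite -(pair_bigA _ (fun i j => w (i, j) ^+ 2)) /= -[LHS]ger0_norm ?inner_self_ge0 //.
  rewrite -sqrtr_sqr expr2 mulr_suml; congr Num.sqrt; apply: eq_bigr => i _.
  by rewrite mulr_sumr; apply: eq_bigr => j _; rewrite /w; ring.
rewrite quadE frobE normE -sqrtrM ?sumr_ge0 // => [|p _]; last exact: sqr_ge0.
by rewrite -sqrtr_sqr ler_wsqrtr // sum_mulr_sqr_le.
Qed.

End InnerProduct.

Section Householder.
Variables (R : realType) (n : nat).
Implicit Types (u w : 'rV[R]_n).

Definition reflectmx w : 'M[R]_n := 1%:M - (2 / (w *m w^T) 0 0) *: (w^T *m w).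

Lemma reflectmx_orthogonal w : (w *m w^T) 0 0 != 0 ->
  reflectmx w *m (reflectmx w)^T = 1%:M.
Proof.
move=> s_neq0; pose W := w^T *m w; pose c : R := 2 / (w *m w^T) 0 0.
have symW : W^T = W by rewrite trmx_mul trmxK.
have sqW : W *m W = (w *m w^T) 0 0 *: W.
  rewrite /W mulmxA -(mulmxA w^T) {1}[w *m w^T]mx11_scalar.
  by rewrite mul_mx_scalar -scalemxAl.
have cs : c * c * (w *m w^T) 0 0 = c + c by rewrite -mulrA /c mulfVK // mulr_natr mulr2n.
have symH : (1%:M - c *: W)^T = 1%:M - c *: W.
  by apply/matrixP => i j; rewrite -[in RHS]symW !mxE eq_sym.
rewrite /reflectmx -/W -/c symH mulmxBl !mulmxBr !mul1mx mulmx1.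
rewrite -scalemxAl -scalemxAr sqW !scalerA cs scalerDl.
have -> : c *: W - (c *: W + c *: W) = - (c *: W) by rewrite opprD addrA subrr add0r.
by rewrite opprK subrK.
Qed.

Lemma row_reflectmx w (x : 'rV[R]_n) :
  x *m reflectmx w = x - (2 * (x *m w^T) 0 0 / (w *m w^T) 0 0) *: w.
Proof.
rewrite /reflectmx mulmxBr mulmx1 -scalemxAr mulmxA {1}[x *m w^T]mx11_scalar.
by rewrite mul_scalar_mx scalerA mulrAC.
Qed.

End Householder.

Lemma row_dot_gt0 (R : realType) n (x : 'rV[R]_n) : x != 0 -> 0 < (x *m x^T) 0 0.
Proof. by rewrite -trmx_eq0 => /inner_self_gt0; rewrite innerE trmxK. Qed.

Lemma orthomx_completion (R : realType) n (u : 'rV[R]_n.+1) : u *m u^T = 1%:M ->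
  exists V : 'M[R]_n.+1, V *m V^T = 1%:M /\ row 0 V = u.
Proof.
move=> uu; pose e : 'rV[R]_n.+1 := delta_mx 0 0.
have [->|u_neq_e] := eqVneq u e; first by exists 1%:M; rewrite trmx1 mulmx1 row1.
pose w := e - u.
have eeT : e *m e^T = 1%:M.
  by rewrite trmx_delta mul_delta_mx; apply/matrixP => i j; rewrite !ord1 !mxE.
have euT : e *m u^T = (u 0 0)%:M by rewrite [LHS]mx11_scalar -rowE !mxE.
have ueT : u *m e^T = (u 0 0)%:M by rewrite [LHS]mx11_scalar trmx_delta -colE mxE.
have wwT : (w *m w^T) 0 0 = 2 * (1 - u 0 0).
  rewrite /w linearB /= mulmxBl !mulmxBr eeT euT ueT uu -!raddfB /= mxE eqxx mulr1n.
  ring.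
have ewT : (e *m w^T) 0 0 = 1 - u 0 0.
  by rewrite /w linearB /= mulmxBr eeT euT !mxE eqxx.
have s_neq0 : (w *m w^T) 0 0 != 0.
  by apply: lt0r_neq0; apply: row_dot_gt0; rewrite subr_eq0 eq_sym.
(* The reflection in the hyperplane orthogonal to e - u swaps e and u. *)
exists (reflectmx w); split; first exact: reflectmx_orthogonal.
rewrite rowE -/e row_reflectmx ewT -wwT mulfV // scale1r.
by rewrite /w opprB addrC subrK.
Qed.

Section SpectralTheorem.
Variable R : realType.

Lemma sym_eigenvalue_real n (A : 'M[R]_n.+1) : A^T = A -> exists a, eigenvalue A a.
Proof.
move=> symA; pose Ac := map_mx (real_complex R) A.
have Areal : Ac \is a realmx.
  by apply/mxOverP => i j; rewrite mxE; apply/complex_realP; exists (A i j).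
have Asym : Ac \is symmetricmx.
  apply/is_hermitianmxP; rewrite expr0 scale1r map_mx_id //.
  by apply/matrixP => i j; rewrite /Ac !mxE -[A in LHS]symA mxE.
have /orthomx_spectralP Aspec := hermitian_normalmx (realsym_hermsym Asym Areal).
set P := spectralmx Ac in Aspec; set D := spectral_diag Ac in Aspec.
have Punit : P \in unitmx := spectral_unit Ac.
have P0_eigen : row 0 P *m Ac = D 0 0 *: row 0 P.
  rewrite -row_mul {1}Aspec !mulmxA mulmxV // mul1mx.
  by apply/rowP => k; rewrite mul_diag_mx !mxE.
have P0_neq0 : row 0 P != 0.
  apply/eqP => P0; move/(congr1 (row 0)): (mulmxV Punit).
  rewrite row_mul P0 mul0mx => /rowP/(_ 0); rewrite !mxE eqxx => /eqP.
  by rewrite eq_sym oner_eq0.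
have /complex_realP [a Da] : D 0 0 \is Num.real.
  exact: mxOverP (hermitian_spectral_diag_real (realsym_hermsym Asym Areal)) 0 0.
exists a; rewrite -(eigenvalue_map (real_complex R)); apply/eigenvalueP.
by exists (row 0 P); first by move: P0_eigen; rewrite Da.
Qed.

Lemma sym_unit_eigenvector n (A : 'M[R]_n.+1) : A^T = A ->
  exists (l : R) (u : 'rV[R]_n.+1), u *m u^T = 1%:M /\ u *m A = l *: u.
Proof.
move=> /sym_eigenvalue_real [l /eigenvalueP [x xA x_neq0]].
have N_gt0 := row_dot_gt0 x_neq0; set N := (x *m x^T) 0 0 in N_gt0.
exists l, ((Num.sqrt N)^-1 *: x); split; last by rewrite -scalemxAl xA !scalerA mulrC.
have trZ (c : R) : (c *: x)^T = c *: x^T by apply/matrixP => i j; rewrite !mxE.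
rewrite trZ -scalemxAl -scalemxAr scalerA {1}[x *m x^T]mx11_scalar -/N.
by rewrite -invfM -expr2 sqr_sqrtr ?ltW // scale_scalar_mx mulVf ?gt_eqF.
Qed.

Lemma sym_block_diag n l (B : 'M[R]_(1 + n)) : B^T = B ->
  row 0 B = l *: row 0 1%:M -> B = block_mx l%:M 0 0 (drsubmx B).
Proof.
move=> symB rowB; have B0E k : B 0 k = l * (0 == k)%:R.
  by move/rowP/(_ k): rowB; rewrite !mxE.
have lshift0 : lshift n (0 : 'I_1) = 0 by apply: val_inj.
have rshift_neq0 (j : 'I_n) : ((0 : 'I_(1 + n)) == rshift 1 j) = false.
  by apply/negbTE; rewrite -val_eqE.
rewrite -{1}[B]submxK; congr block_mx; apply/matrixP => i j; rewrite !ord1 !mxE lshift0.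
- by rewrite B0E eqxx mulr1.
- by rewrite B0E rshift_neq0 mulr0.
- by rewrite -symB mxE B0E rshift_neq0 mulr0.
Qed.

Theorem sym_orthomx_diag d (A : 'M[R]_d) : A^T = A ->
  exists (U : 'M[R]_d) (c : 'rV[R]_d), U^T *m U = 1%:M /\ A = U *m diag_mx c *m U^T.
Proof.
elim: d A => [|n IH] A symA.
  by exists 1%:M, 0; rewrite trmx1 mulmx1 [A]flatmx0 [_ *m _]flatmx0.
have [l [u [uu uA]]] := sym_unit_eigenvector symA.
have [V [VV rowV]] := orthomx_completion uu.
pose B : 'M[R]_(1 + n) := V *m A *m V^T.
have symB : B^T = B by rewrite /B !trmx_mul trmxK symA mulmxA.
have BE : B = block_mx l%:M 0 0 (drsubmx B).
  apply: sym_block_diag symB _.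
  by rewrite /B !row_mul rowV uA -scalemxAl -rowV -row_mul VV.
have symC : (drsubmx B)^T = drsubmx B by rewrite trmx_drsub symB.
have [W [c [WW CE]]] := IH _ symC.
pose Q : 'M[R]_(1 + n) := block_mx 1%:M 0 0 W.
have QT : Q^T = block_mx 1%:M 0 0 W^T by rewrite tr_block_mx trmx1 !trmx0.
exists (V^T *m Q), (row_mx (const_mx l : 'rV_1) c); split.
  rewrite trmx_mul trmxK QT mulmxA -(mulmxA _ V) VV mulmx1.
  rewrite (@mulmx_block _ 1 n 1 n 1 n) !mul0mx !mulmx0 !mul1mx !addr0 !add0r WW.
  by rewrite [RHS](scalar_mx_block 1 n).
have BQ : B = Q *m diag_mx (row_mx (const_mx l : 'rV_1) c) *m Q^T.
  rewrite diag_mx_row diag_const_mx QT !(@mulmx_block _ 1 n 1 n 1 n).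
  by rewrite !mul0mx !mulmx0 !mul1mx !mulmx1 !addr0 !add0r mul0mx -CE -BE.
have -> : A = V^T *m B *m V.
  by rewrite /B !mulmxA (mulmx1C VV) mul1mx -mulmxA (mulmx1C VV) mulmx1.
by rewrite BQ trmx_mul trmxK !mulmxA.
Qed.

End SpectralTheorem.

Section Abeta.
Variables (R : realType) (d : nat).
Implicit Types (A M : 'M[R]_d) (v : 'cV[R]_d).

Lemma is_Abeta_Abeta A beta : A^T = A -> is_Abeta A beta (Abeta A beta).
Proof.
move=> /sym_orthomx_diag [U [c [UU AE]]].
apply: (xgetPex 0 (P := [set M | is_Abeta A beta M])).
exists (\sum_j Num.max (c 0 j) beta *: (col j U *m (col j U)^T)), U, (fun j => c 0 j).
do 2!split => //; rewrite sum_rank1E AE; congr (_ *m diag_mx _ *m _).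
by apply/rowP => j; rewrite mxE.
Qed.

Lemma is_Abeta_inner_bounds A M beta v : psd A -> 0 < beta -> is_Abeta A beta M ->
  [/\ beta * inner v v <= inner (M *m v) v,
      inner (A *m v) v <= inner (M *m v) v &
      inner (M *m v) v <= inner (A *m v) v + beta * inner v v].
Proof.
move=> [_ psdA] beta_gt0 [U [lam [UU [AE ME]]]].
have lam_ge0 j : 0 <= lam j.
  have := psdA (U *m col j 1%:M); rewrite AE inner_sum_rank1 mulmxA UU mul1mx.
  rewrite (bigD1 j) //= big1 ?addr0 => [|k /negbTE kj]; last by rewrite !mxE kj expr0n mulr0.
  by rewrite !mxE eqxx expr1n mulr1.
rewrite AE ME !inner_sum_rank1 -(inner_orthomx v UU) inner_selfE mulr_sumr.
split; rewrite ?mulr_sumr -?big_split /=; apply: ler_sum => j _; rewrite -?mulrDl.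
- by apply: ler_wpM2r; rewrite ?sqr_ge0 ?le_max ?lexx ?orbT.
- by apply: ler_wpM2r; rewrite ?sqr_ge0 ?le_max ?lexx.
- by apply: ler_wpM2r; rewrite ?sqr_ge0 // ge_max lerDl lerDr (ltW beta_gt0) lam_ge0.
Qed.

Lemma Abeta_inner_ge0 A beta v : psd A -> 0 < beta -> 0 <= inner (Abeta A beta *m v) v.
Proof.
move=> psdA beta_gt0.
have [lb _ _] := is_Abeta_inner_bounds v psdA beta_gt0 (is_Abeta_Abeta beta psdA.1).
by apply: le_trans lb; apply: mulr_ge0; [exact: ltW | exact: inner_self_ge0].
Qed.

Lemma Abeta_inner_le A1 A2 beta v : psd A1 -> psd A2 -> 0 < beta ->
  inner (Abeta A2 beta *m v) v
    <= (2 + frob_norm (A1 - A2) / beta) * inner (Abeta A1 beta *m v) v.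
Proof.
move=> psd1 psd2 beta_gt0.
have [lb1 le1 _] := is_Abeta_inner_bounds v psd1 beta_gt0 (is_Abeta_Abeta beta psd1.1).
have [_ _ ub2] := is_Abeta_inner_bounds v psd2 beta_gt0 (is_Abeta_Abeta beta psd2.1).
have := inner_mulmx_le_frob (A1 - A2) v; rewrite mulmxBl innerBl => /ler_normlP [diff _].
have F_ge0 : 0 <= frob_norm (A1 - A2) by exact: sqrtr_ge0.
have FN : frob_norm (A1 - A2) * inner v v
    <= frob_norm (A1 - A2) / beta * inner (Abeta A1 beta *m v) v.
  by rewrite -mulrA ler_wpM2l // mulrC ler_pdivlMr // mulrC.
lra.
Qed.

End Abeta.

Local Open Scope classical_set_scope.

Theorem mainTheorem3 (R : realType) (d : nat) (Theta : set 'cV[R]_d)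
    (A : 'cV[R]_d -> 'M[R]_d) (L : R)
    (hpsd : forall theta, theta \in Theta -> psd (A theta))
    (hLip : forall theta1 theta2, theta1 \in Theta -> theta2 \in Theta ->
       frob_norm (A theta1 - A theta2) <= L * eucl_norm (theta1 - theta2)) :
  forall (beta : R) (v : 'cV[R]_d) (theta1 theta2 : 'cV[R]_d),
    0 < beta -> theta1 \in Theta -> theta2 \in Theta ->
    normM (Abeta (A theta2) beta) v ^+ 2
      <= (3 + L * beta^-1 * eucl_norm (theta1 - theta2))
         * normM (Abeta (A theta1) beta) v ^+ 2.
Proof.
move=> beta v t1 t2 beta_gt0 t1_in t2_in.
have psd1 := hpsd t1 t1_in; have psd2 := hpsd t2 t2_in.
rewrite /normM !sqr_sqrtr ?Abeta_inner_ge0 //.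
apply: (le_trans (Abeta_inner_le v psd1 psd2 beta_gt0)).
apply: ler_wpM2r; first exact: Abeta_inner_ge0.
apply: lerD; first by rewrite ler_nat.
rewrite mulrAC; apply: ler_wpM2r; [by rewrite invr_ge0 ltW | exact: hLip].
Qed.
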